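(* Let $\mathcal{T}$ be an unweighted tree on $L$ vertices and let $f:\mathbb{N}\to\mathbb{R}$ be an arbitrary function. Then the mask matrix $\mathbf{M} = [f(\mathrm{dist}_{\mathcal{T}}(i,j))]_{i,j=1,\dots,L}$ supports matrix-vector multiplication in time $O(L\log^2 L)$. Consequently $(\mathcal{T}, f)$ is tractable.
   Context: $\mathrm{dist}_{\mathcal{T}}(i,j)$ is the number of edges on the path between $i$ and $j$. A pair $(\mathcal{T},f)$ is tractable if $\mathbf{M}\mathbf{x}$ can be computed for every $\mathbf{x}\in\mathbb{R}^L$ in $o(L^2)$ time. Values of $f$ are assumed available in $O(1)$ time each; time counts arithmetic operations. *)

From mathcomp Require Import all_boot.
From Stdlib Require Import Reals.

Set Implicit Arguments.
Unset Strict Implicit.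
Unset Printing Implicit Defensive.

Definition simple_graph (L : nat) (e : rel 'I_L) : Prop :=
  symmetric e /\ irreflexive e.

Definition acyclic (L : nat) (e : rel 'I_L) : Prop :=
  forall c : seq 'I_L, uniq c -> 2 < size c -> ~~ cycle e c.

Definition is_tree (L : nat) (e : rel 'I_L) : Prop :=
  0 < L /\ simple_graph e /\ (forall i j, connect e i j) /\ acyclic e.

Definition walk_len (L : nat) (e : rel 'I_L) (i j : 'I_L) (n : nat) : bool :=
  [exists p : n.-tuple 'I_L, path e i p && (last i p == j)].

(* dist_T(i,j): the number of edges of the (shortest, in a tree: unique) path
   from i to j; in a connected graph on L vertices it is < L. *)
Definition tree_dist (L : nat) (e : rel 'I_L) (i j : 'I_L) : nat :=
  find (walk_len e i j) (iota 0 L).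

Inductive instr (L : nat) : Type :=
  | IInput of 'I_L
  | IQuery of nat           (* read f(k), O(1) oracle access *)
  | IConst of R
  | IAdd of nat & nat
  | ISub of nat & nat
  | IMul of nat & nat
  | IDiv of nat & nat.

Section Run.
Variables (L : nat) (f : nat -> R) (x : 'I_L -> R).

Definition reg (vals : seq R) (a : nat) : R := nth 0%R vals a.

Definition step (vals : seq R) (ins : instr L) : R :=
  match ins with
  | IInput i => x i
  | IQuery k => f k
  | IConst c => c
  | IAdd a b => Rplus (reg vals a) (reg vals b)
  | ISub a b => Rminus (reg vals a) (reg vals b)
  | IMul a b => Rmult (reg vals a) (reg vals b)
  | IDiv a b => Rdiv (reg vals a) (reg vals b)
  end.

Fixpoint run_aux (vals : seq R) (p : seq (instr L)) : seq R :=
  match p with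
  | [::] => vals
  | ins :: p' => run_aux (rcons vals (step vals ins)) p'
  end.

Definition run (p : seq (instr L)) : seq R := run_aux [::] p.
End Run.

Record slp (L : nat) := SLP { instrs : seq (instr L); outs : 'I_L -> nat }.

Definition cost (L : nat) (P : slp L) : nat := size (instrs P).

Definition mask_mv (L : nat) (e : rel 'I_L) (f : nat -> R) (x : 'I_L -> R)
    (i : 'I_L) : R :=
  \big[Rplus/0%R]_(j < L) Rmult (f (tree_dist e i j)) (x j).

Definition computes_mask_mv (L : nat) (e : rel 'I_L) (P : slp L) : Prop :=
  forall (f : nat -> R) (x : 'I_L -> R) (i : 'I_L),
    reg (run f x (instrs P)) (outs P i) = mask_mv e f x i.

(* Tractability: M x computable in o(L^2) operations, for every tree on L
   vertices and every f. *)
Definition tractable_trees : Prop :=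
  exists g : nat -> nat,
    (forall k, 0 < k -> exists N, forall L, N <= L -> k * g L <= L ^ 2) /\
    (forall L (e : rel 'I_L), is_tree e ->
       exists P : slp L, computes_mask_mv e P /\ cost P <= g L).

From Stdlib Require Import Reals.
From mathcomp Require Import all_boot all_algebra complex Rstruct zify ring.

Set Implicit Arguments.
Unset Strict Implicit.
Unset Printing Implicit Defensive.
Import GRing.Theory Num.Theory.

(* Centroid decomposition.  Let S be a set of vertices closed under geodesics and c a
   centroid of S, so that every branch K of S at c (the vertices reached from c through a
   given neighbour) has at most |S|/2 vertices.  A geodesic from i in K to j outside K
   passes through c, hence
     (M x)_i = sum_(j in S) f(d(c,i) + d(c,j)) x_j - sum_(j in K) f(d(c,i) + d(c,j)) x_j
               + sum_(j in K) f(d(i,j)) x_j.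
   Grouping the x_j by their depth d(c,j), the first two sums are Hankel products
   y_t = sum_s f(t + s) X_s; these are entries of a single cyclic convolution of length
   O(|S|), computed by radix-2 FFTs with O(|S| log |S|) arithmetic operations.  The last
   sum is the same problem on K.  Since the sizes halve, the total cost is
   O(L log^2 L) = o(L^2). *)

Section DiscreteFourier.
Local Open Scope ring_scope.

Lemma sum_even_odd (V : nmodType) m (F : nat -> V) :
  \sum_(t < (2 * m)%N) F t = \sum_(t < m) F (2 * t)%N + \sum_(t < m) F (2 * t).+1.
Proof.
elim: m => [|m IH]; first by rewrite muln0 !big_ord0 addr0.
rewrite (_ : 2 * m.+1 = (2 * m).+2)%N; last by lia.
by rewrite !big_ord_recr /= IH addrACA addrA.
Qed.

Variable F : comNzRingType.
Implicit Types (w : F) (a u v : nat -> F).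

Definition dft n w a j := \sum_(t < n) a t * w ^+ (j * t).

Lemma dft_even_odd m w a j :
  dft (2 * m)%N w a j = dft m (w ^+ 2) (fun t => a (2 * t)%N) j
                      + w ^+ j * dft m (w ^+ 2) (fun t => a (2 * t).+1) j.
Proof.
rewrite /dft (sum_even_odd _ (fun t => a t * w ^+ (j * t))) mulr_sumr.
congr (_ + _); apply: eq_bigr => t _.
  by rewrite mulnCA exprM.
by rewrite mulnS exprD mulnCA exprM mulrCA.
Qed.

Lemma dft_even_odd_shift m w a j : w ^+ m = -1 ->
  dft (2 * m)%N w a (j + m)%N = dft m (w ^+ 2) (fun t => a (2 * t)%N) j
                            - w ^+ j * dft m (w ^+ 2) (fun t => a (2 * t).+1) j.
Proof.
move=> wm; have shift t : w ^+ ((j + m) * t) = w ^+ (j * t) * (-1) ^+ t.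
  by rewrite mulnDl exprD [w ^+ (m * t)]exprM wm.
have sign_even t : (-1 : F) ^+ (2 * t) = 1 by rewrite exprM sqrrN !expr1n.
rewrite /dft (sum_even_odd _ (fun t => a t * w ^+ ((j + m) * t))) mulr_sumr -sumrN.
congr (_ + _); apply: eq_bigr => t _; rewrite shift.
  by rewrite sign_even mulr1 mulnCA exprM.
by rewrite exprS sign_even mulnS exprD mulnCA exprM; ring.
Qed.

End DiscreteFourier.

Section CyclicConvolution.
Local Open Scope ring_scope.
Variable V : pzSemiRingType.
Implicit Types (u v x : nat -> V).

Definition cconv n u v t :=
  \sum_(s < n) \sum_(r < n) (if ((s + r) %% n == t)%N then u s * v r else 0).

(* As [2 * D <= n], no index wraps around. *)
Lemma cconv_reversed n D u x t : (0 < D)%N -> (2 * D <= n)%N -> (t < D)%N ->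
  cconv n u (fun r => if (r < D)%N then x (D - 1 - r)%N else 0) (t + D - 1)%N
  = \sum_(s < D) u (t + s)%N * x s.
Proof.
move=> D_gt0 Dn tD; rewrite /cconv exchange_big /=.
transitivity (\sum_(r < n) if (r < D)%N then u (t + D - 1 - r)%N * x (D - 1 - r)%N else 0).
  apply: eq_bigr => r _; case: ifP => rD; last by apply: big1 => s _; rewrite mulr0 if_same.
  have rn : (t + D - 1 - r < n)%N by lia.
  rewrite (bigD1 (Ordinal rn)) //= modn_small ?subnK ?eqxx; try lia.
  rewrite big1 ?addr0 // => s /negbTE s_neq; case: ifP => // /eqP sr.
  move: s_neq; rewrite -(inj_eq val_inj) /=; have s_lt := ltn_ord s.
  case: (ltnP (s + r) n) sr => [/modn_small -> sr|snr].
    by rewrite -sr addnK eqxx.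
  by rewrite -(subnK snr) modnDr modn_small; lia.
rewrite [RHS](reindex_inj rev_ord_inj) /=.
rewrite (big_ord_widen n (fun s => u (t + (D - s.+1))%N * x (D - s.+1)%N)); last by lia.
rewrite [RHS]big_mkcond; apply: eq_bigr => r _; case: ifP => // rD.
by congr (u _ * x _); lia.
Qed.

End CyclicConvolution.

Lemma cconv_map (V W : pzSemiRingType) (phi : {rmorphism V -> W}) n (u v : nat -> V) t :
  phi (cconv n u v t) = cconv n (phi \o u) (phi \o v) t.
Proof.
rewrite rmorph_sum; apply: eq_bigr => s _; rewrite rmorph_sum; apply: eq_bigr => r _.
by case: ifP; rewrite ?rmorphM ?rmorph0.
Qed.

Section RootsOfUnity.
Local Open Scope ring_scope.

Lemma sum_expr_unity_root (F : idomainType) n (x : F) : x ^+ n = 1 ->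
  \sum_(j < n) x ^+ j = if x == 1 then n%:R else 0.
Proof.
case: eqP => [-> _|/eqP x_neq1 xn].
  by rewrite (eq_bigr (fun=> 1)) ?sumr_const ?card_ord // => j _; rewrite expr1n.
have /esym/eqP := subrX1 x n; rewrite xn subrr mulf_eq0 subr_eq0 (negbTE x_neq1) /=.
exact/eqP.
Qed.

Lemma exists_expr2_eqN1 (C : numClosedFieldType) k : exists w : C, w ^+ (2 ^ k) = -1.
Proof.
elim: k => [|k [w wk]]; first by exists (-1); rewrite expr1.
by exists (sqrtC w); rewrite expnS exprM sqrtCK.
Qed.

Lemma prim_root_expr2_eqN1 (F : numDomainType) k (w : F) :
  w ^+ (2 ^ k) = -1 -> (2 ^ k.+1).-primitive_root w.
Proof.
move=> wk; have w_root : w ^+ (2 ^ k.+1) = 1 by rewrite expnS mulnC exprM wk sqrrN expr1n.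
have [m m_prim m_dvd] := prim_order_exists (expn_gt0 2 k.+1) w_root.
have [i i_le m_eq] := dvdn_pfactor m k.+1 (isT : prime 2) m_dvd; rewrite m_eq in m_prim.
case: (ltnP i k.+1) => [i_lt|i_ge].
  have : (2 ^ i %| 2 ^ k)%N by rewrite dvdn_Pexp2l.
  by rewrite (prim_order_dvd m_prim) wk -subr_eq0 -opprD oppr_eq0 -mulr2n pnatr_eq0.
by rewrite (_ : k.+1 = i) //; apply/eqP; rewrite eqn_leq i_ge i_le.
Qed.

Lemma dftV_dft_mul (F : fieldType) n (w : F) (u v : nat -> F) t :
  n.-primitive_root w -> (t < n)%N ->
  dft n w^-1 (fun j => dft n w u j * dft n w v j) t = n%:R * cconv n u v t.
Proof.
move=> w_prim tn.
have w_neq0 : w != 0 by rewrite (prim_root_eq0 w_prim) -lt0n (prim_order_gt0 w_prim).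
pose x s r := w ^+ (s + r) * w^-1 ^+ t.
have x_root s r : x s r ^+ n = 1.
  rewrite exprMn -!exprM !(mulnC _ n) !exprM exprVn (prim_expr_order w_prim).
  by rewrite invr1 !expr1n mulr1.
have x_eq1 s r : (x s r == 1) = ((s + r) %% n == t)%N.
  have -> : (x s r == 1) = (w ^+ (s + r) == w ^+ t).
    rewrite /x exprVn; apply/eqP/eqP => [/divr1_eq|->] //.
    by rewrite divff // expf_neq0.
  by rewrite (eq_prim_root_expr w_prim) (modn_small tn).
transitivity (\sum_(j < n) \sum_(s < n) \sum_(r < n) u s * v r * x s r ^+ j).
  apply: eq_bigr => j _; rewrite !big_distrl /=; apply: eq_bigr => s _.
  rewrite big_distrr big_distrl /=; apply: eq_bigr => r _.
  by rewrite /x exprMn -!exprM mulnDl exprD !(mulnC j) (mulnC t); ring.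
rewrite exchange_big /cconv mulr_sumr; apply: eq_bigr => s _ /=.
rewrite exchange_big mulr_sumr; apply: eq_bigr => r _ /=.
rewrite -mulr_sumr sum_expr_unity_root // x_eq1.
by case: ifP; rewrite ?mulr0 // mulrC.
Qed.

End RootsOfUnity.

Lemma big_partition_lt (V : Type) (idx : V) (op : Monoid.com_law idx) (I : finType)
    (A : pred I) (dep : I -> nat) D (F : I -> V) :
  (forall j, A j -> dep j < D) ->
  \big[op/idx]_(s < D) \big[op/idx]_(j | A j && (dep j == s)) F j = \big[op/idx]_(j | A j) F j.
Proof.
move=> depD; rewrite (exchange_big_dep A) /= => [|s j _ /andP [] //].
apply: eq_bigr => j Aj; rewrite (big_pred1 (Ordinal (depD j Aj))) // => s.
by rewrite Aj /= -val_eqE eq_sym.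
Qed.

Section Programs.
Variable L : nat.
Local Notation prog := (seq (instr L)).
Implicit Types (p q : prog) (P Q : prog -> Prop).

Definition sem := (nat -> R) -> ('I_L -> R) -> R.

(* The bound on [r] keeps the property true when instructions are appended: a missing
   register reads as the junk value 0. *)
Definition reg_computes p r (v : sem) := r < size p /\ forall f x, reg (run f x p) r = v f x.

Definition computed p (v : sem) := exists r, reg_computes p r v.

Definition persistent P := forall p q, P p -> P (p ++ q).

Definition buildable p c P := exists2 q, P (p ++ q) & size q <= c.

Lemma run_aux_cat f x vals p q :
  run_aux f x vals (p ++ q) = run_aux f x (run_aux f x vals p) q.
Proof. by elim: p vals => //= i p IH vals. Qed.

Lemma size_run_aux f x vals p : size (run_aux f x vals p) = size vals + size p.
Proof. by elim: p vals => [|i p IH] vals /=; rewrite ?addn0 // IH size_rcons addSnnS. Qed.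

Lemma nth_run_aux f x vals p r :
  r < size vals -> nth 0%R (run_aux f x vals p) r = nth 0%R vals r.
Proof.
elim: p vals => //= i p IH vals r_lt.
by rewrite IH ?nth_rcons ?r_lt // size_rcons ltnW.
Qed.

Lemma computed_persistent v : persistent (computed^~ v).
Proof.
move=> p q [r [r_lt rv]]; exists r; split; first by rewrite size_cat ltn_addr.
move=> f x; rewrite /reg /run run_aux_cat nth_run_aux ?size_run_aux //; exact: rv.
Qed.

Lemma computed_ext p v v' : computed p v -> (forall f x, v f x = v' f x) -> computed p v'.
Proof. by move=> [r [r_lt rv]] vv'; exists r; split=> // f x; rewrite rv. Qed.

Lemma computed_rcons p ins : computed (rcons p ins) (fun f x => step f x (run f x p) ins).
Proof.
exists (size p); split=> [|f x]; first by rewrite size_rcons.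
by rewrite /reg /run -cats1 run_aux_cat /= nth_rcons size_run_aux ltnn eqxx.
Qed.

Lemma buildable_ret p P : P p -> buildable p 0 P.
Proof. by exists [::]; rewrite ?cats0. Qed.

Lemma buildable_le p c c' P : c <= c' -> buildable p c P -> buildable p c' P.
Proof. by move=> cc' [q Pq qc]; exists q => //; apply: leq_trans cc'. Qed.

Lemma buildable_mono p c P Q :
  (forall q, P (p ++ q) -> Q (p ++ q)) -> buildable p c P -> buildable p c Q.
Proof. by move=> PQ [q Pq qc]; exists q; first exact: PQ. Qed.

Lemma buildable_bind p c1 c2 P Q : buildable p c1 P ->
  (forall q, P (p ++ q) -> buildable (p ++ q) c2 Q) -> buildable p (c1 + c2) Q.
Proof.
move=> [q1 Pq1 q1c] /(_ q1 Pq1) [q2 Qq2 q2c].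
by exists (q1 ++ q2); rewrite ?catA // size_cat leq_add.
Qed.

Lemma buildable_foreach (T : eqType) (s : seq T) (c : T -> nat) (P : T -> prog -> Prop) p :
  (forall y, persistent (P y)) -> (forall y q, y \in s -> buildable (p ++ q) (c y) (P y)) ->
  buildable p (\sum_(y <- s) c y) (fun p' => forall y, y \in s -> P y p').
Proof.
move=> P_pers; elim: s => [|y s IH] Pstep.
  by rewrite big_nil; apply: buildable_ret => y.
rewrite big_cons addnC; apply: buildable_bind (IH _) _ => [z q zs|q Ps].
  by apply: Pstep; rewrite inE zs orbT.
rewrite -[c y]addn0; apply: buildable_bind (Pstep y q (mem_head _ _)) _ => q' Py.
apply: buildable_ret => z; rewrite inE => /orP [/eqP -> // | zs].
by apply: P_pers; apply: Ps.
Qed.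

Lemma buildable_forall (T : finType) (c : T -> nat) (P : T -> prog -> Prop) p :
  (forall y, persistent (P y)) -> (forall y q, buildable (p ++ q) (c y) (P y)) ->
  buildable p (\sum_(y : T) c y) (fun p' => forall y, P y p').
Proof.
move=> P_pers Pstep.
by apply: buildable_mono (buildable_foreach P_pers (fun y q _ => Pstep y q)) => q Pq y; apply: Pq.
Qed.

Lemma buildable_forall_lt m (c : nat -> nat) (P : nat -> prog -> Prop) p :
  (forall t, persistent (P t)) -> (forall t q, t < m -> buildable (p ++ q) (c t) (P t)) ->
  buildable p (\sum_(t < m) c t) (fun p' => forall t, t < m -> P t p').
Proof.
move=> P_pers Pstep; rewrite -(big_mkord xpredT) /index_iota subn0.
apply: buildable_mono (buildable_foreach P_pers _) => [q Pq t tm|t q].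
  by apply: Pq; rewrite mem_iota.
by rewrite mem_iota => /andP [_]; apply: Pstep.
Qed.

Lemma buildable_forall_lt_uniform m c (P : nat -> prog -> Prop) p :
  (forall t, persistent (P t)) -> (forall t q, t < m -> buildable (p ++ q) c (P t)) ->
  buildable p (m * c) (fun p' => forall t, t < m -> P t p').
Proof.
by move=> P_pers Pstep; rewrite -[m in m * c]card_ord -sum_nat_const; apply: buildable_forall_lt.
Qed.

Inductive binop := OAdd | OSub | OMul.

Definition binop_instr o a b : instr L :=
  match o with OAdd => IAdd L a b | OSub => ISub L a b | OMul => IMul L a b end.

Definition binop_sem o : R -> R -> R :=
  match o with OAdd => +%R | OSub => fun a b => (a - b)%R | OMul => *%R end.

(* Expressions over values [TVal v] already held in registers; [build_term] emits one
   instruction per node of any other kind. *)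
Inductive term :=
  | TVal of sem
  | TInput of 'I_L
  | TQuery of nat
  | TConst of R
  | TBin of binop & term & term.

Fixpoint tsem t : sem :=
  match t with
  | TVal v => v
  | TInput i => fun _ x => x i
  | TQuery k => fun f _ => f k
  | TConst c => fun _ _ => c
  | TBin o a b => fun f x => binop_sem o (tsem a f x) (tsem b f x)
  end.

Fixpoint tcost t :=
  match t with
  | TVal _ => 0
  | TBin _ a b => (tcost a + tcost b).+1
  | _ => 1
  end.

Fixpoint leaves_computed p t : Prop :=
  match t with
  | TVal v => computed p v
  | TBin _ a b => leaves_computed p a /\ leaves_computed p b
  | _ => True
  end.

Lemma leaves_computed_persistent t : persistent (leaves_computed^~ t).
Proof.
elim: t => //= [v|o a IHa b IHb] p q; first exact: computed_persistent.
by case=> ? ?; split; [apply: IHa | apply: IHb].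
Qed.

Lemma buildable_rcons p ins v : (forall f x, step f x (run f x p) ins = v f x) ->
  buildable p 1 (computed^~ v).
Proof.
by move=> insv; exists [:: ins]; rewrite // cats1; apply: computed_ext (computed_rcons p ins) insv.
Qed.

Lemma build_term p t v : leaves_computed p t -> (forall f x, tsem t f x = v f x) ->
  buildable p (tcost t) (computed^~ v).
Proof.
move=> tp tv; apply: (buildable_mono (P := computed^~ (tsem t))) => [q a|].
  exact: computed_ext a tv.
elim: t p {tv} tp => /= [v' p|i p _|k p _|c p _|o a IHa b IHb p [ap bp]].
- by move=> vp; apply: buildable_ret.
- exact: (buildable_rcons (ins := IInput i)).
- exact: (buildable_rcons (ins := IQuery L k)).
- exact: (buildable_rcons (ins := IConst L c)).
rewrite -addn1 -addnA; apply: buildable_bind (IHa p ap) _ => q aq.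
apply: buildable_bind (IHb _ (leaves_computed_persistent q bp)) _ => q' [rb [rb_lt rbE]].
have [ra [ra_lt raE]] := computed_persistent q' aq.
apply: (buildable_rcons (ins := binop_instr o ra rb)) => f x.
by case: o; rewrite /= raE rbE.
Qed.

End Programs.

Declare Scope slp_term_scope.
Delimit Scope slp_term_scope with tm.
Bind Scope slp_term_scope with term.
Arguments TQuery {L}.
Arguments TConst {L}.

Notation "a + b" := (TBin OAdd a b) : slp_term_scope.
Notation "a - b" := (TBin OSub a b) : slp_term_scope.
Notation "a * b" := (TBin OMul a b) : slp_term_scope.

Definition hankel_cost D := 224 * D * (trunc_log 2 D).+1.

Section Circuits.
Variable L : nat.
Local Notation prog := (seq (instr L)).
Implicit Types (p q : prog).

Section ComplexArithmetic.
Local Open Scope ring_scope.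
Local Open Scope complex_scope.

Definition csem := (nat -> R) -> ('I_L -> R) -> R[i].

Definition cre (z : csem) : sem L := fun f x => complex.Re (z f x).
Definition cim (z : csem) : sem L := fun f x => complex.Im (z f x).

Definition ccomputed p z := computed p (cre z) /\ computed p (cim z).

Lemma ccomputed_persistent z : persistent (ccomputed^~ z).
Proof. by move=> p q [re im]; split; apply: computed_persistent. Qed.

Lemma ccomputed_ext p z z' : ccomputed p z -> (forall f x, z f x = z' f x) -> ccomputed p z'.
Proof.
by move=> [re im] zz'; split; [apply: computed_ext re _ | apply: computed_ext im _] => f x;
  rewrite /cre /cim zz'.
Qed.

Lemma build_complex p z tr ti : leaves_computed p tr -> leaves_computed p ti ->
  (forall f x, tsem tr f x = cre z f x) -> (forall f x, tsem ti f x = cim z f x) ->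
  buildable p (tcost tr + tcost ti) (ccomputed^~ z).
Proof.
move=> trp tip trE tiE; apply: buildable_bind (build_term trp trE) _ => q re.
apply: buildable_mono (build_term (leaves_computed_persistent q tip) tiE) => q' im.
by split; first exact: computed_persistent.
Qed.

Lemma build_cconst p (c : R[i]) : buildable p 2 (ccomputed^~ (fun _ _ => c)).
Proof. exact: (build_complex (tr := TConst (complex.Re c)) (ti := TConst (complex.Im c))). Qed.

Lemma build_cadd p z1 z2 : ccomputed p z1 -> ccomputed p z2 ->
  buildable p 2 (ccomputed^~ (fun f x => z1 f x + z2 f x)).
Proof.
move=> [re1 im1] [re2 im2].
apply: (build_complex (tr := (TVal (cre z1) + TVal (cre z2))%tm)
                      (ti := (TVal (cim z1) + TVal (cim z2))%tm)) => //= f x;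
  by rewrite /cre /cim; case: (z1 f x) => ? ?; case: (z2 f x).
Qed.

Lemma build_csub p z1 z2 : ccomputed p z1 -> ccomputed p z2 ->
  buildable p 2 (ccomputed^~ (fun f x => z1 f x - z2 f x)).
Proof.
move=> [re1 im1] [re2 im2].
apply: (build_complex (tr := (TVal (cre z1) - TVal (cre z2))%tm)
                      (ti := (TVal (cim z1) - TVal (cim z2))%tm)) => //= f x;
  by rewrite /cre /cim; case: (z1 f x) => ? ?; case: (z2 f x).
Qed.

Lemma build_cmul p z1 z2 : ccomputed p z1 -> ccomputed p z2 ->
  buildable p 6 (ccomputed^~ (fun f x => z1 f x * z2 f x)).
Proof.
move=> [re1 im1] [re2 im2].
apply: (build_complex (tr := (TVal (cre z1) * TVal (cre z2) - TVal (cim z1) * TVal (cim z2))%tm)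
                      (ti := (TVal (cre z1) * TVal (cim z2) + TVal (cim z1) * TVal (cre z2))%tm))
  => //= f x;
  by rewrite /cre /cim; case: (z1 f x) => ? ?; case: (z2 f x).
Qed.

Lemma build_butterfly p a b (c : R[i]) : ccomputed p a -> ccomputed p b ->
  buildable p 12 (fun p' => ccomputed p' (fun f x => a f x + c * b f x)
                            /\ ccomputed p' (fun f x => a f x - c * b f x)).
Proof.
move=> ap bp; apply: (buildable_bind (c1 := 2) (build_cconst p c)) => q cq.
apply: (buildable_bind (c1 := 6) (build_cmul cq (ccomputed_persistent q bp))) => q' cbq.
have aq : ccomputed ((p ++ q) ++ q') a by do 2 apply: ccomputed_persistent.
apply: (buildable_bind (c1 := 2) (build_cadd aq cbq)) => q'' sum.
have [aq' cbq'] := conj (ccomputed_persistent q'' aq) (ccomputed_persistent q'' cbq).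
apply: buildable_mono (build_csub aq' cbq') => q''' diff.
by split; first exact: ccomputed_persistent.
Qed.

End ComplexArithmetic.

Section FastFourierTransform.
Local Open Scope ring_scope.
Local Open Scope complex_scope.

Lemma build_fft k (w : R[i]) p (z : nat -> csem) :
  ((0 < k)%N -> w ^+ (2 ^ k.-1) = -1) -> (forall t, (t < 2 ^ k)%N -> ccomputed p (z t)) ->
  buildable p (6 * k * 2 ^ k)%N
    (fun p' => forall j, (j < 2 ^ k)%N ->
       ccomputed p' (fun f x => dft (2 ^ k)%N w (fun t => z t f x) j)).
Proof.
elim: k w p z => [|k IH] w p z w_half zp.
  apply: buildable_ret => j; rewrite expn0 ltnS leqn0 => /eqP ->.
  by apply: ccomputed_ext (zp 0%N isT) _ => f x; rewrite /dft big_ord1 mulr1.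
have two_k : (2 ^ k.+1 = 2 * 2 ^ k)%N by rewrite expnS.
have w2_half : (0 < k)%N -> (w ^+ 2) ^+ (2 ^ k.-1) = -1.
  by case: k {IH two_k zp} w_half => // k w_half _; rewrite -exprM -expnS w_half.
have wm : w ^+ (2 ^ k) = -1 by exact: w_half.
pose E j : csem := fun f x => dft (2 ^ k) (w ^+ 2) (fun t => z (2 * t)%N f x) j.
pose O j : csem := fun f x => dft (2 ^ k) (w ^+ 2) (fun t => z (2 * t).+1 f x) j.
pose butterflies j p' := ccomputed p' (fun f x => E j f x + w ^+ j * O j f x)
                         /\ ccomputed p' (fun f x => E j f x - w ^+ j * O j f x).
apply: (buildable_le (_ : 6 * k * 2 ^ k + (6 * k * 2 ^ k + 2 ^ k * 12) <= _)%N).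
  by rewrite two_k; lia.
apply: buildable_bind (IH (w ^+ 2) p (fun t => z (2 * t)%N) w2_half _) _ => [t tk|q1 Eq1].
  by apply: zp; rewrite two_k; lia.
apply: buildable_bind (IH (w ^+ 2) (p ++ q1) (fun t => z (2 * t).+1) w2_half _) _ => [t tk|q2 Oq2].
  by apply: ccomputed_persistent; apply: zp; rewrite two_k; lia.
apply: buildable_mono (buildable_forall_lt_uniform (P := butterflies) _ _) => [q3 bfly j|j|j q jk].
- rewrite two_k => jk; have [j_lo|j_hi] := ltnP j (2 ^ k).
    have [lo _] := bfly j j_lo.
    by apply: ccomputed_ext lo _ => f x; rewrite dft_even_odd.
  have jk' : (j - 2 ^ k < 2 ^ k)%N by lia.
  have [_ hi] := bfly _ jk'.
  apply: ccomputed_ext hi _ => f x.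
  by rewrite -(subnK j_hi) dft_even_odd_shift // addnK.
- by move=> p' q [l r]; split; apply: ccomputed_persistent.
apply: build_butterfly; apply: ccomputed_persistent; last exact: Oq2.
by apply: ccomputed_persistent; apply: Eq1.
Qed.

Lemma build_cconv k p (u v : nat -> sem L) :
  (forall t, (t < 2 ^ k.+1)%N -> computed p (u t)) ->
  (forall t, (t < 2 ^ k.+1)%N -> computed p (v t)) ->
  buildable p (27 * k.+1 * 2 ^ k.+1)%N
    (fun p' => forall t, (t < 2 ^ k.+1)%N ->
       computed p' (fun f x => cconv (2 ^ k.+1) (fun s => u s f x) (fun r => v r f x) t)).
Proof.
move=> up vp; set n := (2 ^ k.+1)%N.
have [w wk] := exists_expr2_eqN1 R[i] k.
have w_prim : n.-primitive_root w := prim_root_expr2_eqN1 wk.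
have wV_half : (w^-1) ^+ (2 ^ k) = -1 by rewrite exprVn wk invrN1.
pose U j : csem := fun f x => dft n w (fun t => (u t f x)%:C) j.
pose V j : csem := fun f x => dft n w (fun t => (v t f x)%:C) j.
pose W t : csem := fun f x => dft n w^-1 (fun j => U j f x * V j f x) t.
have n_gt0 : (0 < n)%N by rewrite expn_gt0.
apply: (buildable_le (_ : 1 + (6 * k.+1 * n + (6 * k.+1 * n + (n * 6 + (6 * k.+1 * n + n * 2))))
                          <= 27 * k.+1 * n)%N); first by nia.
apply: buildable_bind (build_term (t := TConst 0) (v := fun _ _ => 0) I (fun _ _ => erefl)) _
  => q0 zero.
have realC (a : nat -> sem L) t : (t < n)%N -> computed p (a t) ->
    ccomputed (p ++ q0) (fun f x => (a t f x)%:C).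
  by move=> _ ap; split; [apply: computed_persistent | exact: zero].
apply: buildable_bind (build_fft (k := k.+1) (w := w) (fun _ => wk)
                        (fun t tn => realC u t tn (up t tn))) _ => q1 dftU.
apply: buildable_bind (build_fft (k := k.+1) (w := w) (fun _ => wk)
                        (fun t tn => ccomputed_persistent q1 (realC v t tn (vp t tn)))) _
  => q2 dftV.
apply: buildable_bind (buildable_forall_lt_uniform
           (P := fun j p' => ccomputed p' (fun f x => U j f x * V j f x)) _ _) _
  => [j|j q jn|q3 prodUV].
- exact: ccomputed_persistent.
- apply: build_cmul; apply: ccomputed_persistent; last exact: dftV.
  by apply: ccomputed_persistent; apply: dftU.
apply: buildable_bind (build_fft (k := k.+1) (w := w^-1) (fun _ => wV_half) prodUV) _ => q4 dftW.
apply: buildable_forall_lt_uniform => [t|t q tn]; first exact: computed_persistent.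
have Wt : computed ((((((p ++ q0) ++ q1) ++ q2) ++ q3) ++ q4) ++ q) (cre (W t)).
  by apply: computed_persistent; case: (dftW t tn).
apply: (build_term (t := (TVal (cre (W t)) * TConst (n%:R^-1)%R)%tm)) => //= f x.
rewrite /cre /W /U /V dftV_dft_mul //.
have -> : cconv n (fun s => (u s f x)%:C) (fun r => (v r f x)%:C) t
          = (cconv n (fun s => u s f x) (fun r => v r f x) t)%:C by rewrite cconv_map.
have Re_natC (c : R) : complex.Re (n%:R * c%:C) = n%:R * c.
  by rewrite -(rmorph_nat (real_complex R)) -rmorphM.
rewrite Re_natC mulrAC mulfV ?mul1r //.
by rewrite pnatr_eq0 -lt0n.
Qed.

End FastFourierTransform.

Section HankelProducts.
Local Open Scope ring_scope.

Lemma build_hankel D p (X : nat -> sem L) :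
  (0 < D)%N -> (forall s, (s < D)%N -> computed p (X s)) ->
  buildable p (hankel_cost D)
    (fun p' => forall t, (t < D)%N ->
       computed p' (fun f x => \sum_(s < D) f (t + s)%N * X s f x)).
Proof.
move=> D_gt0 Xp; set lg := trunc_log 2 D.
have D_lo : (2 ^ lg <= D)%N by apply: trunc_logP.
have D_hi : (D < 2 * 2 ^ lg)%N by rewrite -expnS; apply: trunc_log_ltn.
have n_eq : (2 ^ lg.+2 = 4 * 2 ^ lg)%N by rewrite !expnS mulnA.
have cost_lg : (lg.+2 * 2 ^ lg <= lg.+2 * D)%N by rewrite leq_mul2l D_lo orbT.
apply: (buildable_le (_ : 1 + (2 ^ lg.+2 * 1 + 27 * lg.+2 * 2 ^ lg.+2) <= _)%N).
  by rewrite /hankel_cost n_eq; nia.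
apply: buildable_bind (build_term (t := TConst 0) (v := fun _ _ => 0) I (fun _ _ => erefl)) _
  => q0 zero.
apply: buildable_bind (buildable_forall_lt_uniform
           (P := fun t p' => computed p' (fun f _ => f t)) _ _) _ => [t|t q _|q1 queries].
  exact: computed_persistent.
  exact: (build_term (t := TQuery t)).
pose Xrev r : sem L := fun f x => if (r < D)%N then X (D - 1 - r)%N f x else 0.
apply: buildable_mono (build_cconv (v := Xrev) queries _) => [q2 conv t tD|r _].
  apply: computed_ext (conv (t + D - 1)%N _) _ => [|f x]; first by rewrite n_eq; lia.
  by rewrite /Xrev (@cconv_reversed _ _ D (fun s => f s) (fun s => X s f x) t) // n_eq; lia.
have [rD|rD] := ltnP r D.
  apply: computed_ext (_ : computed _ (X (D - 1 - r)%N)) _ => [|f x]; last by rewrite /Xrev rD.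
  by do 2 apply: computed_persistent; apply: Xp; lia.
by apply: computed_ext (computed_persistent q1 zero) _ => f x; rewrite /Xrev ltnNge rD.
Qed.

Lemma build_sum_inputs p (J : seq 'I_L) :
  buildable p (2 * size J + 1)%N (fun p' => computed p' (fun _ x => \sum_(j <- J) x j)).
Proof.
pose T := foldr (fun j t => (TInput j + t)%tm) (TConst 0) J.
have [T_leaves T_cost T_sem] : [/\ leaves_computed p T, tcost T = (2 * size J + 1)%N
    & forall f x, tsem T f x = \sum_(j <- J) x j].
  elim: J @T => [|j J [IHa IHc IHs]] /=; first by split=> // f x; rewrite big_nil.
  by split=> // [|f x]; [rewrite IHc; lia | rewrite big_cons IHs].
by rewrite -T_cost; apply: build_term.
Qed.

Lemma build_depth_hankel (P : {set 'I_L}) (dep : 'I_L -> nat) D p :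
  (0 < D)%N -> (forall j, j \in P -> (dep j < D)%N) ->
  buildable p (hankel_cost D + (2 * #|P| + D))
    (fun p' => forall t, (t < D)%N ->
       computed p' (fun f x => \sum_(j in P) f (t + dep j)%N * x j)).
Proof.
move=> D_gt0 depD; pose bucket s j := (j \in P) && (dep j == s).
have bucket_cards : (\sum_(s < D) (2 * #|bucket s| + 1) = 2 * #|P| + D)%N.
  rewrite big_split /= sum_nat_const card_ord muln1 -big_distrr /= -sum1_card.
  rewrite -(big_partition_lt _ _ depD); congr (2 * _ + _).
  by apply: eq_bigr => s _; rewrite sum1_card.
rewrite addnC -bucket_cards.
apply: buildable_bind (buildable_forall_lt (c := fun s => (2 * #|bucket s| + 1)%N)
    (P := fun s p' => computed p' (fun _ x => \sum_(j | bucket s j) x j)) _ _) _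
  => [s|s q _|q1 sums].
- exact: computed_persistent.
- rewrite cardE; apply: buildable_mono (build_sum_inputs _ _) => q' sum.
  by apply: computed_ext sum _ => f x; rewrite big_enum.
apply: buildable_mono (build_hankel D_gt0 sums) => q2 hankel t tD.
apply: computed_ext (hankel t tD) _ => f x; rewrite -(big_partition_lt _ _ depD).
apply: eq_bigr => s _; rewrite big_distrr /=.
by apply: eq_bigr => j /andP [_ /eqP ->].
Qed.

End HankelProducts.

End Circuits.

Section TreeDistance.
Variables (L : nat) (e : rel 'I_L).
Hypothesis e_tree : is_tree e.

Let e_sym : symmetric e. Proof. by case: e_tree => _ [[]]. Qed.
Let e_irr : irreflexive e. Proof. by case: e_tree => _ [[]]. Qed.
Let e_connect i j : connect e i j. Proof. by case: e_tree => _ [_ []]. Qed.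
Let e_acyclic : acyclic e. Proof. by case: e_tree => _ [_ []]. Qed.

Local Notation d := (tree_dist e).

Lemma walk_lenP i j n :
  reflect (exists p, [/\ size p = n, path e i p & last i p = j]) (walk_len e i j n).
Proof.
apply: (iffP existsP) => [[p /andP [ip /eqP pj]]|[p [pn ip pj]]].
  by exists (val p); rewrite size_tuple.
have pn' : size p == n by rewrite pn.
by exists (Tuple pn'); rewrite /= ip pj eqxx.
Qed.

Lemma exists_short_path i j : exists p, [/\ path e i p, last i p = j & size p < L].
Proof.
have /connectP [p ip ->] := e_connect i j.
have [p' ip' p'_uniq _] := shortenP ip.
exists p'; split=> //; have /= card_p' := card_uniqP p'_uniq.
by have := max_card (mem (i :: p')); rewrite card_p' card_ord /=; lia.
Qed.

Lemma tree_dist_spec i j : walk_len e i j (d i j) /\ d i j < L.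
Proof.
have [p [ip pj pL]] := exists_short_path i j.
have has_walk : has (walk_len e i j) (iota 0 L).
  by apply/hasP; exists (size p); rewrite ?mem_iota //; apply/walk_lenP; exists p.
have find_lt : d i j < L by rewrite -[X in _ < X](size_iota 0) -has_find.
by split=> //; have := nth_find 0 has_walk; rewrite nth_iota.
Qed.

Lemma tree_dist_min i j n : walk_len e i j n -> d i j <= n.
Proof.
move=> ijn; have [nL|Ln] := ltnP n L; last by have [_] := tree_dist_spec i j; lia.
rewrite leqNgt; apply/negP => /(before_find 0); rewrite nth_iota // ijn //.
Qed.

Lemma tree_dist_path_le i p : path e i p -> d i (last i p) <= size p.
Proof. by move=> ip; apply: tree_dist_min; apply/walk_lenP; exists p. Qed.

Lemma tree_dist_path i j : exists p, [/\ path e i p, last i p = j & size p = d i j].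
Proof. by have [/walk_lenP [p [pn ip pj]] _] := tree_dist_spec i j; exists p. Qed.

Lemma tree_dist0 i : d i i = 0.
Proof. by apply/eqP; rewrite -leqn0; apply: (@tree_dist_path_le i [::]). Qed.

Lemma tree_dist_eq0 i j : d i j = 0 -> i = j.
Proof. by have [[|k p] [_ <- pn]] := tree_dist_path i j; rewrite -pn. Qed.

Lemma tree_dist_triangle i j k : d i k <= d i j + d j k.
Proof.
have [p [ip pj <-]] := tree_dist_path i j; have [q [jq qk <-]] := tree_dist_path j k.
have := @tree_dist_path_le i (p ++ q).
by rewrite cat_path last_cat ip pj jq qk size_cat; apply.
Qed.

Lemma path_rev_belast i p : path e i p ->
  [/\ path e (last i p) (rev (belast i p)), last (last i p) (rev (belast i p)) = i,
      size (rev (belast i p)) = size p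
    & last i p :: rev (belast i p) =i i :: p].
Proof.
move=> ip; split.
- by rewrite rev_path; apply: sub_path ip => a b; rewrite e_sym.
- by case: p {ip} => //= a p; rewrite rev_cons last_rcons.
- by rewrite size_rev size_belast.
- by move=> v; rewrite [i :: p]lastI mem_rcons !inE mem_rev.
Qed.

Lemma tree_distC i j : d i j = d j i.
Proof.
suff dle a b : d a b <= d b a by apply/eqP; rewrite eqn_leq !dle.
have [p [bp pa <-]] := tree_dist_path b a; have [rp rp_last <- _] := path_rev_belast bp.
by have := tree_dist_path_le rp; rewrite rp_last pa.
Qed.

Lemma tree_dist_edge i j : e i j -> d i j = 1.
Proof.
move=> ij; apply/eqP; rewrite eqn_leq; apply/andP; split.
  by have := @tree_dist_path_le i [:: j]; rewrite /= ij; apply.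
by rewrite lt0n; apply/eqP => /tree_dist_eq0 eq_ij; move: ij; rewrite eq_ij e_irr.
Qed.

Lemma tree_dist_on_path i p v : path e i p -> v \in i :: p ->
  d i v + d v (last i p) <= size p.
Proof.
move=> ip; rewrite inE => /orP [/eqP ->|vp]; first by rewrite tree_dist0 tree_dist_path_le.
case/splitPr: vp ip => p1 p2; rewrite cat_path last_cat /= => /andP [ip1 /andP [p1v vp2]].
have := tree_dist_path_le vp2; have := @tree_dist_path_le i (rcons p1 v).
by rewrite rcons_path ip1 p1v last_rcons size_rcons size_cat /= => /(_ isT); lia.
Qed.

Definition avoids c i j := exists p, [/\ path e i p, last i p = j & c \notin i :: p].

Lemma avoids_sym c i j : avoids c i j -> avoids c j i.
Proof.
move=> [p [ip <- cp]]; have [rp rp_last _ rp_mem] := path_rev_belast ip.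
by exists (rev (belast i p)); rewrite rp_mem.
Qed.

Lemma avoids_trans c i j k : avoids c i j -> avoids c j k -> avoids c i k.
Proof.
move=> [p [ip <- cp]] [q [jq <- cq]]; exists (p ++ q).
rewrite cat_path last_cat ip jq; split=> //.
by move: cp cq; rewrite !inE mem_cat !negb_or => /andP [-> ->] /andP [_ ->].
Qed.

Lemma avoids_detour c i j : d i j < d i c + d c j -> avoids c i j.
Proof.
move=> ij; have [p [ip pj pn]] := tree_dist_path i j; exists p; split=> //.
by apply/negP => /(tree_dist_on_path ip); rewrite pj pn; lia.
Qed.

Lemma path_avoiding c a p : path e a p -> c \notin a :: p ->
  path [rel u v | e u v && (u != c) && (v != c)] a p.
Proof.
elim: p a => //= v p IH u /andP [uv vp].
rewrite !inE => /norP [uc /norP [vc cp]]; rewrite uv eq_sym uc eq_sym vc /=.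
by apply: IH; rewrite // inE negb_or vc.
Qed.

Lemma neighbors_avoid_eq c a b : e c a -> e c b -> avoids c a b -> a = b.
Proof.
move=> ca cb [p [ap pb cp]]; apply/eqP/negP => /negP ab.
case: (shortenP (path_avoiding ap cp)) pb => p' ap' p'_uniq p'_sub p'b.
have cp' : c \notin a :: p'.
  move: cp; rewrite !inE !negb_or => /andP [-> cp] /=.
  by apply/negP => /p'_sub; apply/negP.
have p'_nil : p' != [::] by apply: contraNneq ab => p'_nil; rewrite -p'b p'_nil.
have := @e_acyclic (c :: a :: p'); rewrite [uniq (c :: _)]cons_uniq cp' p'_uniq.
have -> : 2 < size (c :: a :: p') by case: p' p'_nil {ap' p'_uniq p'_sub p'b cp'}.
move=> /(_ isT isT); rewrite /= ca rcons_path p'b (e_sym b c) cb andbT.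
by rewrite (sub_path _ ap') // => u v /andP [/andP []].
Qed.

(* The neighbour of [c] on the path to [w], and [c] itself when [w = c]. *)
Definition toward c w : 'I_L :=
  if [pick a | e c a && ((d a w).+1 == d c w)] is Some a then a else c.

Lemma toward_spec c w : w != c -> e c (toward c w) /\ (d (toward c w) w).+1 = d c w.
Proof.
move=> wc; rewrite /toward; case: pickP => [a /andP [ca /eqP //]|none].
have [[|a p] [/= cp pw pn]] := tree_dist_path c w; first by move: wc; rewrite -pw eqxx.
move: cp => /andP [ca ap]; have := none a; rewrite ca /=.
have := tree_dist_path_le ap; have := tree_dist_triangle c a w.
by rewrite pw (tree_dist_edge ca) => ? ? /negP []; apply/eqP; lia.
Qed.

Lemma toward_uniq c w a : e c a -> (d a w).+1 = d c w -> a = toward c w.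
Proof.
move=> ca daw; have wc : w != c by apply: contra_eqN daw => /eqP ->; rewrite tree_dist0.
have [cb dbw] := toward_spec wc; apply: (neighbors_avoid_eq ca cb).
apply: (@avoids_trans _ _ w).
  by apply: avoids_detour; rewrite (tree_distC a c) (tree_dist_edge ca); lia.
by apply: avoids_sym; apply: avoids_detour; rewrite (tree_distC _ c) (tree_dist_edge cb); lia.
Qed.

Lemma toward_neighbor c a : e c a -> toward c a = a.
Proof. by move=> ca; rewrite -(toward_uniq ca) // tree_dist0 tree_dist_edge. Qed.

Lemma tree_dist_split c w v : w != c -> v != c -> toward c w != toward c v ->
  d w v = d w c + d c v.
Proof.
move=> wc vc; apply: contraNeq => wv_neq; apply/eqP.
have wv_lt : d w v < d w c + d c v by have := tree_dist_triangle w c v; lia.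
have [ca dcw] := toward_spec wc; have [cb dcv] := toward_spec vc.
apply: (neighbors_avoid_eq ca cb); apply: (@avoids_trans _ _ w).
  by apply: avoids_detour; rewrite (tree_distC _ c) (tree_dist_edge ca); lia.
apply: avoids_trans (avoids_detour wv_lt) _.
by apply: avoids_sym; apply: avoids_detour; rewrite (tree_distC _ c) (tree_dist_edge cb); lia.
Qed.

Lemma tree_dist_same_toward c w v : w != c -> v != c -> toward c w = toward c v ->
  d w v + 2 <= d w c + d c v.
Proof.
move=> wc vc same; have [_ dcw] := toward_spec wc; have [_ dcv] := toward_spec vc.
have := tree_dist_triangle w (toward c w) v.
by rewrite [d w (toward c w)]tree_distC {2}same [d w c]tree_distC; lia.
Qed.

Definition convex (S : {set 'I_L}) :=
  forall u v w, u \in S -> v \in S -> d u w + d w v = d u v -> w \in S.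

Definition branch c a (S : {set 'I_L}) := [set w in S | (w != c) && (toward c w == a)].

Lemma branch_sub S c a : branch c a S \subset S.
Proof. by apply/subsetP => w; rewrite inE => /andP []. Qed.

Lemma convex_branch S c a : convex S -> convex (branch c a S).
Proof.
move=> S_conv u v w; rewrite !inE.
move=> /andP [uS /andP [uc /eqP ua]] /andP [vS /andP [vc /eqP va]] uwv.
rewrite (S_conv u v w uS vS uwv) /=.
have short := tree_dist_same_toward uc vc (etrans ua (esym va)).
have wc : w != c by apply: contra_eqN uwv => /eqP ->; lia.
rewrite wc /=; apply: contraTT short => wa.
rewrite -uwv (tree_dist_split uc wc) ?ua 1?eq_sym // (tree_dist_split wc vc) ?va //; lia.
Qed.

Lemma tree_dist_lt_card S c j : convex S -> c \in S -> j \in S -> d c j < #|S|.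
Proof.
move=> S_conv cS jS; have [p [cp pj pn]] := tree_dist_path c j.
have pS : {subset c :: p <= S}.
  move=> v vp; apply: (S_conv c j v cS jS).
  by have := tree_dist_on_path cp vp; have := tree_dist_triangle c v j; rewrite pj pn; lia.
case: (shortenP cp) pj => p' cp' p'_uniq p'_sub p'j.
have := tree_dist_path_le cp'; rewrite p'j => dp'.
have p'S : c :: p' \subset S.
  apply/subsetP => v; rewrite inE => /orP [/eqP -> //|/p'_sub vp].
  by apply: pS; rewrite inE vp orbT.
by have := subset_leq_card p'S; rewrite (card_uniqP p'_uniq) /=; lia.
Qed.

Lemma branch_root S c a w : convex S -> c \in S -> w \in branch c a S -> a \in branch c a S.
Proof.
move=> S_conv cS; rewrite !inE => /andP [wS /andP [wc /eqP wa]].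
have [ca dcw] := toward_spec wc; rewrite wa in ca dcw.
have aS : a \in S by apply: (S_conv c w a cS wS); rewrite tree_dist_edge // add1n.
rewrite aS toward_neighbor // eqxx andbT /=.
by apply: contraTneq ca => ->; rewrite e_irr.
Qed.

Lemma tree_dist_le_card_branch S c a j : convex S -> c \in S -> j \in branch c a S ->
  d c j <= #|branch c a S|.
Proof.
move=> S_conv cS jB; have aB := branch_root S_conv cS jB.
have := tree_dist_lt_card (convex_branch (c := c) (a := a) S_conv) aB jB.
move: jB; rewrite inE => /andP [_ /andP [jc /eqP ja]].
by have [_] := toward_spec jc; rewrite ja; lia.
Qed.

Lemma sum_card_branch S c : \sum_(a < L) #|branch c a S| <= #|S|.
Proof.
have -> : \sum_(a < L) #|branch c a S| = \sum_(w | (w \in S) && (w != c)) 1.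
  rewrite [RHS](partition_big (toward c) xpredT) //=; apply: eq_bigr => a _.
  by rewrite -sum1_card; apply: eq_bigl => w; rewrite !inE andbA.
rewrite sum1_card; apply: subset_leq_card; apply/subsetP => w.
by rewrite unfold_in => /andP [].
Qed.

Lemma branch_back_sub S c a : e c a -> branch a c S \subset S :\: branch c a S.
Proof.
move=> ca; apply/subsetP => v; rewrite inE => /andP [vS /andP [va /eqP vc]].
rewrite in_setD vS andbT inE vS /=; apply/negP => /andP [vc' /eqP v_a].
have [_] := toward_spec va; have [_] := toward_spec vc'; rewrite vc v_a; lia.
Qed.

Lemma branch_forward_sub S c a b : e c a -> b != c -> branch a b S \subset branch c a S :\ a.
Proof.
move=> ca bc; have ac : a != c by apply: contraTneq ca => ->; rewrite e_irr.
have toward_ac : toward a c = c by rewrite toward_neighbor // e_sym.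
apply/subsetP => v; rewrite inE => /andP [vS /andP [va /eqP vb]].
have vc : v != c by apply: contra_neq bc => v_c; rewrite -vb v_c.
rewrite in_setD1 va inE vS vc /=; apply/eqP/esym/toward_uniq => //.
have ca' : c != a by rewrite eq_sym.
rewrite (tree_distC c v) (tree_dist_split va ca') ?toward_ac ?vb //.
by rewrite (tree_distC v a) (@tree_dist_edge a c) 1?e_sym // addn1.
Qed.

Lemma branch_neighbor_card_lt S c a b : e c a -> a \in branch c a S ->
  #|S| < 2 * #|branch c a S| -> #|branch a b S| < #|branch c a S|.
Proof.
move=> ca aB big; have [->|bc] := eqVneq b c.
  have := subset_leq_card (branch_back_sub S ca).
  by rewrite cardsD (setIidPr (branch_sub _ _ _)); lia.
have := subset_leq_card (branch_forward_sub S ca bc).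
by rewrite (cardsD1 a (branch c a S)) aB add1n ltnS.
Qed.

Lemma centroid S : convex S -> S != set0 ->
  exists2 c, c \in S & forall a, 2 * #|branch c a S| <= #|S|.
Proof.
move=> S_conv /set0Pn [c0 c0S].
have [c cS c_min] := arg_minnP (fun c => \max_(a < L) #|branch c a S|) c0S.
exists c => // a; rewrite leqNgt; apply/negP => big.
have /card_gt0P [w wB] : 0 < #|branch c a S| by lia.
have aB := branch_root S_conv cS wB.
have aS : a \in S := subsetP (branch_sub _ _ _) _ aB.
move: wB; rewrite inE => /andP [_ /andP [wc /eqP wa]].
have [ca _] := toward_spec wc; rewrite wa in ca.
have := c_min a aS; rewrite leqNgt => /negP []; apply: (@leq_ltn_trans (#|branch c a S|).-1).
  by apply/bigmax_leqP => b _; have := branch_neighbor_card_lt b ca aB big; lia.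
by rewrite prednK; [exact: (leq_bigmax (F := fun a => #|branch c a S|)) | lia].
Qed.

End TreeDistance.

Section CostBounds.
Local Notation lg := (trunc_log 2).

Definition mask_cost m := 1000 * m * (lg m).+1 ^ 2.

Definition branch_cost k := hankel_cost k.+1 + (2 * k + k.+1) + (mask_cost k + k * 2).

Definition branch_coef m := 460 * (lg m).+1 + 1000 * lg m ^ 2.

Lemma lg_half k m : 0 < k -> 2 * k <= m -> (lg k).+1 <= lg m.
Proof.
move=> k_gt0 km; apply: trunc_log_max => //.
by rewrite expnS; have := trunc_logP (isT : 1 < 2) k_gt0; lia.
Qed.

Lemma branch_cost_le k m : 0 < k -> 2 * k <= m -> branch_cost k <= k * branch_coef m.
Proof.
move=> k_gt0 km; have lg_k := lg_half k_gt0 km.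
have lg_k1 : lg k.+1 <= lg m by apply: leq_trunc_log; lia.
have sq : (lg k).+1 ^ 2 <= lg m ^ 2 by rewrite leq_exp2r.
rewrite /branch_cost /hankel_cost /mask_cost /branch_coef; move: lg_k lg_k1 sq.
move: (lg k.+1) ((lg k).+1 ^ 2) (lg m) (lg m ^ 2) => a b l l2; nia.
Qed.

Lemma root_cost_le m : hankel_cost m + (2 * m + m) + m * branch_coef m <= mask_cost m.
Proof. by rewrite /hankel_cost /mask_cost /branch_coef; move: (lg m) => l; nia. Qed.

End CostBounds.

Section MaskedSums.
Variables (L : nat) (e : rel 'I_L).
Hypothesis e_tree : is_tree e.
Local Notation d := (tree_dist e).
Local Notation branch := (branch e).

Definition masked_sum (S : {set 'I_L}) i : sem L :=
  fun f x => (\sum_(j in S) f (d i j) * x j)%R.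

(* Paths from [branch c a S] to the rest of [S] pass through [c]. *)
Lemma masked_sum_branch (S : {set 'I_L}) c a i (f : nat -> R) (x : 'I_L -> R) :
  c \in S -> i \in branch c a S ->
  masked_sum S i f x = (\sum_(j in S) f (d c i + d c j)%N * x j
                        - \sum_(j in branch c a S) f (d c i + d c j)%N * x j
                        + masked_sum (branch c a S) i f x)%R.
Proof.
move=> cS iK; have KS : branch c a S \subset S by apply: branch_sub.
have outside : (\sum_(j in S :\: branch c a S) f (d i j) * x j
                = \sum_(j in S :\: branch c a S) f (d c i + d c j)%N * x j)%R.
  apply: eq_bigr => j; rewrite in_setD => /andP [jK jS]; congr (f _ * _)%R.
  move: iK; rewrite inE => /andP [_ /andP [ic /eqP ia]].
  have [->|jc] := eqVneq j c; first by rewrite (tree_dist0 e_tree) addn0 (tree_distC e_tree).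
  move: jK; rewrite inE jS jc /= => ja.
  by rewrite (tree_dist_split e_tree ic jc) ?ia 1?eq_sym // (tree_distC e_tree i).
rewrite /masked_sum (big_setID (branch c a S)).
rewrite [X in (X - _ + _)%R](big_setID (branch c a S)).
by rewrite /= (setIidPr KS) outside; ring.
Qed.

Lemma build_branch_sums S c a p : convex e S -> c \in S ->
  (forall t, t < #|S| -> computed p (fun f x => \sum_(j in S) f (t + d c j)%N * x j)%R) ->
  (forall q, buildable (p ++ q) (mask_cost #|branch c a S|)
     (fun p' => forall i, i \in branch c a S -> computed p' (masked_sum (branch c a S) i))) ->
  buildable p (branch_cost #|branch c a S|)
    (fun p' => forall i, i \in branch c a S -> computed p' (masked_sum S i)).
Proof.
move=> S_conv cS G rec; rewrite /branch_cost; set K := branch c a S.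
apply: buildable_bind (build_depth_hankel (dep := d c) (P := K) p (ltn0Sn _) _) _ => [j|q1 H].
  exact: tree_dist_le_card_branch.
apply: buildable_bind (rec q1) _ => q2 masked_K.
have -> : #|K| * 2 = \sum_i (if i \in K then 2 else 0) by rewrite -big_mkcond sum_nat_const.
apply: buildable_mono (buildable_forall
    (P := fun i p' => i \in K -> computed p' (masked_sum S i)) _ _) => [q P_all i iK|i|i q].
- exact: P_all.
- by move=> p' q P_i iK; apply: computed_persistent; apply: P_i.
case: ifP => iK; last exact: buildable_ret.
have dK : d c i < #|K|.+1 by apply: tree_dist_le_card_branch.
have iS : i \in S by move: iK; rewrite inE => /andP [].
have dS := tree_dist_lt_card e_tree S_conv cS iS.
apply: (buildable_mono (P := fun p0 => computed p0 (masked_sum S i))) => [q' ? //|].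
pose through_c (P : {set 'I_L}) : sem L :=
  fun f x => (\sum_(j in P) f (d c i + d c j)%N * x j)%R.
apply: (build_term
  (t := (TVal (through_c S) - TVal (through_c K) + TVal (masked_sum K i))%tm)) => /=.
- split; [split|].
  + by do 3 apply: computed_persistent; apply: G.
  + by do 2 apply: computed_persistent; apply: H.
  + by apply: computed_persistent; apply: masked_K.
by move=> f x; rewrite (masked_sum_branch f x cS iK).
Qed.

Lemma build_masked_sums n (S : {set 'I_L}) p : #|S| <= n -> convex e S ->
  buildable p (mask_cost #|S|) (fun p' => forall i, i \in S -> computed p' (masked_sum S i)).
Proof.
elim: n S p => [|n IH] S p Sn S_conv; have [->|S_neq0] := eqVneq S set0;
  try by apply: (buildable_le (leq0n _)); apply: buildable_ret => i; rewrite inE.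
  case/set0Pn: S_neq0 => i iS; have : 0 < #|S| by apply/card_gt0P; exists i.
  lia.
have [c cS c_central] := centroid e_tree S_conv S_neq0.
have S_gt0 : 0 < #|S| by apply/card_gt0P; exists c.
apply: (buildable_le (root_cost_le #|S|)).
apply: buildable_bind (build_depth_hankel (dep := d c) (P := S) p S_gt0 _) _ => [j|q1 G].
  exact: tree_dist_lt_card.
apply: (buildable_le (c := \sum_(a < L) branch_coef #|S| * #|branch c a S|)).
  by rewrite mulnC -big_distrr leq_mul2l sum_card_branch // orbT.
apply: buildable_mono (buildable_forall
    (P := fun a p' => forall i, i \in branch c a S -> computed p' (masked_sum S i)) _ _)
  => [q2 B i iS|a|a q].
- have [->|ic] := eqVneq i c.
    by apply: computed_persistent; apply: computed_ext (G 0 S_gt0) _ => f x; apply: eq_bigr.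
  by apply: (B (toward e c i)); rewrite !inE iS ic eqxx.
- by move=> p' q' Pa i iB; apply: computed_persistent; apply: Pa.
have [k_eq0|k_gt0] := posnP #|branch c a S|.
  rewrite k_eq0 muln0; apply: buildable_ret => i iB.
  by move/card0_eq: k_eq0 => /(_ i); rewrite iB.
have k_half := c_central a.
rewrite mulnC; apply: (buildable_le (branch_cost_le k_gt0 k_half)).
apply: build_branch_sums => // [t tS|q']; first by apply: computed_persistent; apply: G.
apply: IH; last exact: convex_branch.
by lia.
Qed.

End MaskedSums.

Lemma mask_mv_program L (e : rel 'I_L) : is_tree e ->
  exists P : slp L, computes_mask_mv e P /\ cost P <= mask_cost L.
Proof.
move=> e_tree; have S_conv : convex e [set: 'I_L] by move=> u v w _ _ _; rewrite inE.
have [q all_sums q_cost] := build_masked_sums e_tree [::] (leqnn _) S_conv.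
have [o o_spec] := fin_all_exists (fun i => all_sums i (in_setT i)).
exists (SLP q o); split; last by rewrite cardsT card_ord in q_cost.
move=> f x i; have [_ ->] := o_spec i.
by apply: eq_bigl => j; rewrite inE.
Qed.

Lemma cube_le_exp2 u : (u + 13) ^ 3 <= 2 ^ (u + 12).
Proof.
elim: u => // u IH.
have step : (u.+1 + 13) ^ 3 <= 2 * (u + 13) ^ 3 by rewrite !expnS expn0; nia.
by apply: leq_trans step _; rewrite addSn [X in _ <= X]expnS leq_mul2l IH orbT.
Qed.

Lemma poly_le_exp2 K : exists t0, forall t, t0 <= t -> K * t.+1 ^ 2 <= 2 ^ t.
Proof.
exists (maxn 12 K) => t t_ge; have -> : t = (t - 12) + 12 by lia.
apply: leq_trans (cube_le_exp2 _); rewrite (_ : (t - 12 + 12).+1 = t - 12 + 13); last by lia.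
by rewrite [X in _ <= X]expnS leq_mul2r; apply/orP; right; lia.
Qed.

Lemma natpow2E n : Nat.pow n 2 = n ^ 2.
Proof. by rewrite /= multE muln1. Qed.

From Stdlib Require Import Reals.

Theorem lemma6p1 :
  (exists C : nat,
     forall (L : nat) (e : rel 'I_L), 2 <= L -> is_tree e ->
       exists P : slp L, computes_mask_mv e P /\
         cost P <= C * L * (trunc_log 2 L) ^ 2)
  /\ tractable_trees.
Proof.
split.
  exists 4000 => L e L_ge2 /mask_mv_program [P [PM P_cost]]; exists P; split=> //.
  have lg_gt0 : 0 < trunc_log 2 L by apply: trunc_log_max.
  apply: leq_trans P_cost _; rewrite natpow2E /mask_cost.
  by move: (trunc_log 2 L) lg_gt0 => l; rewrite !expnS expn0; nia.
exists mask_cost; split=> [k k_gt0|L e]; last exact: mask_mv_program.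
have [t0 t0_spec] := poly_le_exp2 (1000 * k); exists (expn 2 t0) => L L_ge.
have L_gt0 : 0 < L by apply: leq_trans L_ge; rewrite expn_gt0.
have lg_ge : t0 <= trunc_log 2 L by apply: trunc_log_max.
have := t0_spec _ lg_ge; have := trunc_logP (isT : 1 < 2) L_gt0.
rewrite natpow2E /mask_cost (expnS L) expn1.
by move: (expn 2 _) (expn _.+1 2) => P Q; nia.
Qed.
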